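(* Let $\phi:\mathbb{R}\to\mathbb{R}$ be differentiable, $f(z)=A\phi(Bz)$ with $A\in\mathbb{R}^{k_0\times k}$, $B\in\mathbb{R}^{k\times k_0}$, and let $x^{(1)},\dots,x^{(n)}\in\mathbb{R}^{k_0}$. Run gradient descent with learning rate $\gamma>0$ on $\mathcal{L}=\frac12\sum_{i=1}^n\|x^{(i)}-f(x^{(i)})\|_2^2$. If $A^{(0)}=\sum_{i=1}^n x^{(i)}{a_i^{(0)}}^T$ and $B^{(0)}=\sum_{i=1}^n b_i^{(0)}{x^{(i)}}^T$ for vectors $a_i^{(0)},b_i^{(0)}\in\mathbb{R}^k$, then for all time steps $t$ there exist vectors $a_i^{(t)},b_i^{(t)}\in\mathbb{R}^k$ with $A^{(t)}=\sum_{i=1}^n x^{(i)}{a_i^{(t)}}^T$ and $B^{(t)}=\sum_{i=1}^n b_i^{(t)}{x^{(i)}}^T$.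
   Context: $\phi$ is applied coordinatewise. Gradient descent updates $A\leftarrow A-\gamma\nabla_A\mathcal{L}$, $B\leftarrow B-\gamma\nabla_B\mathcal{L}$ simultaneously. *)

From HB Require Import structures.
From mathcomp Require Import all_boot all_order all_algebra.
From mathcomp Require Import all_classical all_reals all_analysis.
Set Implicit Arguments. Unset Strict Implicit. Unset Printing Implicit Defensive.
Import Order.TTheory GRing.Theory Num.Theory.
Local Open Scope ring_scope.

Section AE.
Variable R : realType.

Definition ae_f (phi : R -> R) (k0 k : nat)
  (A : 'M[R]_(k0, k)) (B : 'M[R]_(k, k0)) (z : 'cV[R]_k0) : 'cV[R]_k0 :=
  A *m map_mx phi (B *m z).

Definition sqnorm2 (m : nat) (v : 'cV[R]_m) : R := \sum_(r < m) (v r 0) ^+ 2.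

Definition ae_loss (phi : R -> R) (k0 k n : nat) (x : 'I_n -> 'cV[R]_k0)
  (A : 'M[R]_(k0, k)) (B : 'M[R]_(k, k0)) : R :=
  2^-1 * \sum_(i < n) sqnorm2 (x i - ae_f phi A B (x i)).

Definition grad_A (phi : R -> R) (k0 k n : nat) (x : 'I_n -> 'cV[R]_k0)
  (A : 'M[R]_(k0, k)) (B : 'M[R]_(k, k0)) : 'M[R]_(k0, k) :=
  \matrix_(p < k0, q < k)
     derive1 (fun s : R => ae_loss phi x (A + s *: delta_mx p q) B) 0.

Definition grad_B (phi : R -> R) (k0 k n : nat) (x : 'I_n -> 'cV[R]_k0)
  (A : 'M[R]_(k0, k)) (B : 'M[R]_(k, k0)) : 'M[R]_(k, k0) :=
  \matrix_(p < k, q < k0)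
     derive1 (fun s : R => ae_loss phi x A (B + s *: delta_mx p q)) 0.

Fixpoint gd (phi : R -> R) (k0 k n : nat) (x : 'I_n -> 'cV[R]_k0) (gamma : R)
  (A0 : 'M[R]_(k0, k)) (B0 : 'M[R]_(k, k0)) (t : nat)
  : 'M[R]_(k0, k) * 'M[R]_(k, k0) :=
  match t with
  | 0 => (A0, B0)
  | t'.+1 =>
      let AB := gd phi x gamma A0 B0 t' in
      (AB.1 - gamma *: grad_A phi x AB.1 AB.2,
       AB.2 - gamma *: grad_B phi x AB.1 AB.2)
  end.

End AE.

From HB Require Import structures.
From mathcomp Require Import all_boot all_order all_algebra.
From mathcomp Require Import all_classical all_reals all_analysis.
Set Implicit Arguments. Unset Strict Implicit. Unset Printing Implicit Defensive.
Import Order.TTheory GRing.Theory Num.Theory.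
Local Open Scope ring_scope.

(** The invariant is that the columns of [A] and the rows of [B] lie in the
    span of the data points.  Writing [e_i = x_i - A phi(B x_i)] for the
    residuals, the gradients are [grad_A = - sum_i e_i phi(B x_i)^T] and
    [grad_B = - sum_i ((A^T e_i) .* phi'(B x_i)) x_i^T].  The rows of [grad_B]
    are always in the span, and the columns of [grad_A] are combinations of
    residuals, which are in the span as soon as the columns of [A] are.  So
    every gradient step preserves the invariant, whatever the step size. *)

Section RowSpan.
Variable F : fieldType.

Lemma submx_sum_outerP m n k (u : 'I_n -> 'rV[F]_k) (M : 'M[F]_(m, k)) :
  (M <= \matrix_i u i)%MS <-> exists b : 'I_n -> 'cV[F]_m, M = \sum_(i < n) b i *m u i.
Proof.
split=> [/submxP[D ->] | [b ->]].
  exists (fun i => col i D); apply/matrixP => p r.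
  rewrite !mxE summxE; apply: eq_bigr => i _.
  by rewrite !mxE big_ord1 !mxE.
apply/summx_sub => i _; apply: submx_trans (submxMl _ _) _.
by rewrite -(rowK u i) row_sub.
Qed.

Lemma trmx_sub_sum_outerP m n k (v : 'I_n -> 'cV[F]_k) (M : 'M[F]_(k, m)) :
  (M^T <= \matrix_i (v i)^T)%MS <->
  exists a : 'I_n -> 'cV[F]_m, M = \sum_(i < n) v i *m (a i)^T.
Proof.
rewrite submx_sum_outerP; split=> -[a eqM]; exists a.
  by rewrite -[M]trmxK eqM raddf_sum; apply: eq_bigr => i _; rewrite /= trmx_mul trmxK.
by rewrite eqM raddf_sum; apply: eq_bigr => i _; rewrite /= trmx_mul trmxK.
Qed.

End RowSpan.

Lemma delta_mx_bilinear (K : pzRingType) m n (u : 'cV[K]_m) (w : 'cV[K]_n) i j :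
  (u^T *m delta_mx i j *m w) 0 0 = u i 0 * w j 0.
Proof.
rewrite -(mul_delta_mx (0 : 'I_1)) !mulmxA -colE -mulmxA -rowE.
by rewrite mxE big_ord1 !mxE.
Qed.

Section Calculus.
Variable R : realType.

Lemma is_derive_affine (t c d : R) : is_derive t 1 (fun s => c + s * d) d.
Proof.
have := is_deriveD (is_derive_cst c t 1)
  (is_deriveM (is_derive_id t 1) (is_derive_cst d t 1)).
by move/is_derive_eq; apply; rewrite scaler0 !add0r /= [X in X = _]mulr1.
Qed.

Lemma is_derive_comp_affine (phi : R -> R) (t c d : R) :
  derivable phi (c + t * d) 1 ->
  is_derive t 1 (fun s => phi (c + s * d)) ('D_1 phi (c + t * d) * d).
Proof.
by move=> hphi; apply: is_derive1_comp; [apply: derivableP | apply: is_derive_affine].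
Qed.

Lemma is_derive_half_sum_sqnorm2 m n (v : 'I_n -> R -> 'cV[R]_m) (dv : 'I_n -> 'cV[R]_m)
    (t : R) :
  (forall i r, is_derive t 1 (fun s => v i s r 0) (dv i r 0)) ->
  is_derive t 1 (fun s => 2^-1 * \sum_(i < n) sqnorm2 (v i s))
    (\sum_(i < n) ((v i t)^T *m dv i) 0 0).
Proof.
move=> dv_entries.
have -> : (fun s => 2^-1 * \sum_(i < n) sqnorm2 (v i s)) =
    2^-1 \*: \sum_(i < n) \sum_(r < m) (fun s => v i s r 0) ^+ 2.
  apply/funext => s; rewrite /= !fct_sumE; congr (_ * _).
  by apply: eq_bigr => i _; rewrite fct_sumE.
(* [is_derive] is a type class: instance resolution assembles the derivative
   of the right-hand side from [dv_entries]. *)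
apply: is_derive_eq.
rewrite scaler_sumr; apply: eq_bigr => i _; rewrite mxE scaler_sumr.
apply: eq_bigr => r _.
by rewrite !mxE /= expr1 !scalerA mulrA mulVf ?pnatr_eq0 // mul1r.
Qed.

Lemma partial_derivatives_mx p q n (F : 'M[R]_(p, q) -> R) (M : 'M[R]_(p, q))
    (u : 'I_n -> 'cV[R]_p) (w : 'I_n -> 'cV[R]_q) :
  (forall D, is_derive (0 : R) 1 (fun s => F (M + s *: D))
                (- \sum_(l < n) ((u l)^T *m D *m w l) 0 0)) ->
  \matrix_(i, j) derive1 (fun s => F (M + s *: delta_mx i j)) 0
    = - \sum_(l < n) u l *m (w l)^T.
Proof.
move=> dF; apply/matrixP => i j.
have dFij := dF (delta_mx i j).
rewrite !mxE derive1E derive_val summxE; congr (- _).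
by apply: eq_bigr => l _; rewrite delta_mx_bilinear !mxE big_ord1 !mxE.
Qed.

Lemma is_derive_sub_mulmx m p (c : 'cV[R]_m) (A : 'M[R]_(m, p)) (w : R -> 'cV[R]_p)
    (dw : 'cV[R]_p) (t : R) :
  (forall j, is_derive t 1 (fun s => w s j 0) (dw j 0)) ->
  forall r, is_derive t 1 (fun s => (c - A *m w s) r 0) ((- (A *m dw)) r 0).
Proof.
move=> dw_entries r.
have -> : (fun s => (c - A *m w s) r 0) =
    cst (c r 0) - \sum_(j < p) A r j \*: (fun s => w s j 0).
  by apply/funext => s; rewrite !mxE /= fct_sumE.
apply: is_derive_eq.
by rewrite sub0r !mxE; congr (- _); apply: eq_bigr.
Qed.

End Calculus.

Definition ae_residual (R : realType) (phi : R -> R) k0 k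
    (A : 'M[R]_(k0, k)) (B : 'M[R]_(k, k0)) (z : 'cV[R]_k0) : 'cV[R]_k0 :=
  z - ae_f phi A B z.

Section Autoencoder.
Variables (R : realType) (phi : R -> R) (k0 k n : nat) (x : 'I_n -> 'cV[R]_k0).

Lemma is_derive_ae_lossA (A D : 'M[R]_(k0, k)) (B : 'M[R]_(k, k0)) :
  is_derive (0 : R) 1 (fun s => ae_loss phi x (A + s *: D) B)
    (- \sum_(i < n)
         ((ae_residual phi A B (x i))^T *m D *m map_mx phi (B *m x i)) 0 0).
Proof.
apply: is_derive_eq.
  apply: (is_derive_half_sum_sqnorm2
            (dv := fun i => - (D *m map_mx phi (B *m x i)))) => i r.
  have -> : (fun s => (x i - ae_f phi (A + s *: D) B (x i)) r 0) =
      (fun s => ae_residual phi A B (x i) r 0 + s * (- (D *m map_mx phi (B *m x i))) r 0).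
    by apply/funext => s; rewrite /ae_f mulmxDl -scalemxAl opprD addrA !mxE mulrN.
  exact: is_derive_affine.
rewrite -sumrN; apply: eq_bigr => i _.
by rewrite scale0r addr0 mulmxN mulmxA mxE.
Qed.

Hypothesis phi_derivable : forall z, derivable phi z 1.

Lemma is_derive_ae_lossB (A : 'M[R]_(k0, k)) (B D : 'M[R]_(k, k0)) :
  is_derive (0 : R) 1 (fun s => ae_loss phi x A (B + s *: D))
    (- \sum_(i < n)
         ((map2_mx *%R (A^T *m ae_residual phi A B (x i))
                       (map_mx ('D_1 phi) (B *m x i)))^T *m D *m x i) 0 0).
Proof.
apply: is_derive_eq.
  apply: (is_derive_half_sum_sqnorm2 (dv := fun i =>
      - (A *m map2_mx *%R (map_mx ('D_1 phi) (B *m x i)) (D *m x i)))) => i.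
  apply: is_derive_sub_mulmx => j.
  have -> : (fun s => map_mx phi ((B + s *: D) *m x i) j 0) =
      (fun s => phi ((B *m x i) j 0 + s * (D *m x i) j 0)).
    by apply/funext => s; rewrite mulmxDl -scalemxAl !mxE.
  have := is_derive_comp_affine (t := 0) (c := (B *m x i) j 0) (d := (D *m x i) j 0)
    (@phi_derivable _).
  by rewrite mul0r addr0 !mxE.
rewrite -sumrN; apply: eq_bigr => i _.
rewrite scale0r addr0 mulmxN mxE !mulmxA -[_^T *m A]trmxK trmx_mul trmxK -!mulmxA.
congr (- _); rewrite [LHS]mxE [RHS]mxE; apply: eq_bigr => j _.
by rewrite !mxE mulrA.
Qed.

Lemma grad_AE (A : 'M[R]_(k0, k)) (B : 'M[R]_(k, k0)) :
  grad_A phi x A B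
    = - \sum_(i < n) ae_residual phi A B (x i) *m (map_mx phi (B *m x i))^T.
Proof.
by apply: (partial_derivatives_mx (F := fun A' => ae_loss phi x A' B)) => D;
  apply: is_derive_ae_lossA.
Qed.

Lemma grad_BE (A : 'M[R]_(k0, k)) (B : 'M[R]_(k, k0)) :
  grad_B phi x A B
    = - \sum_(i < n) map2_mx *%R (A^T *m ae_residual phi A B (x i))
                                 (map_mx ('D_1 phi) (B *m x i)) *m (x i)^T.
Proof.
by apply: (partial_derivatives_mx (F := fun B' => ae_loss phi x A B')) => D;
  apply: is_derive_ae_lossB.
Qed.

Let X : 'M[R]_(n, k0) := \matrix_i (x i)^T.

Lemma data_tr_sub i : ((x i)^T <= X)%MS.
Proof. by rewrite -(rowK (fun i => (x i)^T) i) row_sub. Qed.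

Lemma residual_tr_sub (A : 'M[R]_(k0, k)) (B : 'M[R]_(k, k0)) i :
  (A^T <= X)%MS -> ((ae_residual phi A B (x i))^T <= X)%MS.
Proof.
move=> sA; rewrite /ae_residual /ae_f linearB /= trmx_mul.
by rewrite addmx_sub ?eqmx_opp ?data_tr_sub // (submx_trans (submxMl _ _) sA).
Qed.

Lemma grad_A_tr_sub (A : 'M[R]_(k0, k)) (B : 'M[R]_(k, k0)) :
  (A^T <= X)%MS -> ((grad_A phi x A B)^T <= X)%MS.
Proof.
move=> sA; rewrite grad_AE linearN eqmx_opp raddf_sum.
apply/summx_sub => i _; rewrite /= trmx_mul trmxK.
exact: submx_trans (submxMl _ _) (residual_tr_sub _ _ sA).
Qed.

Lemma grad_B_sub (A : 'M[R]_(k0, k)) (B : 'M[R]_(k, k0)) :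
  (grad_B phi x A B <= X)%MS.
Proof.
rewrite grad_BE eqmx_opp.
by apply/summx_sub => i _; apply: submx_trans (submxMl _ _) (data_tr_sub i).
Qed.

Lemma gd_sub_data (gamma : R) (A0 : 'M[R]_(k0, k)) (B0 : 'M[R]_(k, k0)) t :
  (A0^T <= X)%MS -> (B0 <= X)%MS ->
  ((gd phi x gamma A0 B0 t).1^T <= X)%MS /\ ((gd phi x gamma A0 B0 t).2 <= X)%MS.
Proof.
move=> sA0 sB0; elim: t => [//|t [sA sB]] /=; split.
  rewrite linearB /= addmx_sub ?eqmx_opp // linearZ /= scalemx_sub //.
  exact: grad_A_tr_sub.
by rewrite addmx_sub ?eqmx_opp // scalemx_sub // grad_B_sub.
Qed.

End Autoencoder.

Theorem mainTheorem11 (R : realType) (phi : R -> R)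
  (hphi : forall z : R, derivable phi z 1)
  (k0 k n : nat) (x : 'I_n -> 'cV[R]_k0) (gamma : R) (hgamma : 0 < gamma)
  (a0 b0 : 'I_n -> 'cV[R]_k) :
  let A0 := \sum_(i < n) x i *m (a0 i)^T in
  let B0 := \sum_(i < n) b0 i *m (x i)^T in
  forall t : nat,
    exists a b : 'I_n -> 'cV[R]_k,
      (gd phi x gamma A0 B0 t).1 = \sum_(i < n) x i *m (a i)^T /\
      (gd phi x gamma A0 B0 t).2 = \sum_(i < n) b i *m (x i)^T.
Proof.
move=> A0 B0 t.
have sA0 : (A0^T <= \matrix_i (x i)^T)%MS by apply/trmx_sub_sum_outerP; exists a0.
have sB0 : (B0 <= \matrix_i (x i)^T)%MS by apply/submx_sum_outerP; exists b0.
have [/trmx_sub_sum_outerP[a ->] /submx_sum_outerP[b ->]] :=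
  gd_sub_data hphi gamma t sA0 sB0.
by exists a, b.
Qed.
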